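(* Let $n\ge 3$ be an integer, let $\Omega\subset\mathbb{R}^2$ be open, and let $\Lambda>0$ and $a_0,\dots,a_n$ be smooth real functions of $(x,y)\in\Omega$. Put $H=\frac{p_1^2+p_2^2}{2\Lambda}$ and $F=\sum_{i=0}^n a_i(x,y)\,p_1^{\,n-i}p_2^{\,i}$, and assume $\{H,F\}=0$ identically in $(x,y,p_1,p_2)$. Assume moreover that there are real constants $c_1,c_2$ with $$a_{n-1}=c_1+\sum_{j\ge 0,\ 2j\le n-3}(-1)^j a_{n-3-2j},\qquad a_n=c_2+\sum_{j\ge 0,\ 2j\le n-2}(-1)^j a_{n-2-2j}.$$ (i) If $n=2k$ is even, set $S_e=\sum_{j=0}^{k-1}(-1)^j(n-2j)a_{2j}$ and $S_o=\sum_{j=0}^{k-2}(-1)^j(n-2-2j)a_{2j+1}$. Then $$\big[S_e\Lambda\big]_x+\big[(-S_o+(-1)^{k+1}(n-1)c_1)\Lambda\big]_y=0,\qquad \big[(S_o+(-1)^{k+1}c_1)\Lambda\big]_x+\big[(S_e+(-1)^{k+1}nc_2)\Lambda\big]_y=0 .$$ (ii) If $n=2k+1$ is odd, set $T_e=\sum_{j=0}^{k-1}(-1)^j(n-1-2j)a_{2j}$ and $T_o=\sum_{j=0}^{k-1}(-1)^j(n-1-2j)a_{2j+1}$. Then $$\big[(T_e+(-1)^{k}c_1)\Lambda\big]_x+\big[(-T_o+(-1)^{k}nc_2)\Lambda\big]_y=0,\qquad \big[T_o\Lambda\big]_x+\big[(T_e+(-1)^{k+1}(n-1)c_1)\Lambda\big]_y=0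 .$$
   Context: The Poisson bracket is $\{H,F\}=\sum_{j=1}^2\left(\frac{\partial H}{\partial q^j}\frac{\partial F}{\partial p_j}-\frac{\partial H}{\partial p_j}\frac{\partial F}{\partial q^j}\right)$ with $(q^1,q^2)=(x,y)$. The condition $\{H,F\}=0$ says that $F$ is a first integral (polynomial of degree $n$ in momenta) of the geodesic flow of the metric $\Lambda(x,y)(dx^2+dy^2)$. Subscripts $x,y$ denote partial derivatives. *)

From Stdlib Require Import Reals List.
Open Scope R_scope.

Fixpoint sumR (m : nat) (f : nat -> R) : R :=
  match m with
  | O => 0
  | S m' => sumR m' f + f m'
  end.

Definition open2 (Om : R -> R -> Prop) : Prop :=
  forall x y, Om x y -> exists r, 0 < r /\
    forall x' y', (x' - x)^2 + (y' - y)^2 < r^2 -> Om x' y'.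

Definition cont2_at (f : R -> R -> R) (x y : R) : Prop :=
  forall eps, 0 < eps -> exists delta, 0 < delta /\
    forall x' y', Rabs (x' - x) < delta -> Rabs (y' - y) < delta ->
      Rabs (f x' y' - f x y) < eps.

Definition has_dx (f : R -> R -> R) (x y l : R) : Prop :=
  derivable_pt_lim (fun t => f t y) x l.
Definition has_dy (f : R -> R -> R) (x y l : R) : Prop :=
  derivable_pt_lim (fun t => f x t) y l.

(* Smooth (C^infinity) on Om: there is a family D of all iterated partial
   derivatives (D w = derivative along the word w; false = d/dx, true = d/dy),
   with D nil = f, each D w having partial derivatives D (false::w), D (true::w)
   at every point of Om, and each D w jointly continuous on Om. *)
Definition smooth_on (Om : R -> R -> Prop) (f : R -> R -> R) : Prop :=
  exists D : list bool -> R -> R -> R,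
    D nil = f /\
    forall w x y, Om x y ->
      has_dx (D w) x y (D (false :: w) x y) /\
      has_dy (D w) x y (D (true :: w) x y) /\
      cont2_at (D w) x y.

Definition Ham (Lam : R -> R -> R) (x y p1 p2 : R) : R :=
  (p1^2 + p2^2) / (2 * Lam x y).
Definition Fpoly (n : nat) (a : nat -> R -> R -> R) (x y p1 p2 : R) : R :=
  sumR (S n) (fun i => a i x y * p1 ^ (n - i) * p2 ^ i).

Definition d4_x (G : R -> R -> R -> R -> R) x y p1 p2 l :=
  derivable_pt_lim (fun t => G t y p1 p2) x l.
Definition d4_y (G : R -> R -> R -> R -> R) x y p1 p2 l :=
  derivable_pt_lim (fun t => G x t p1 p2) y l.
Definition d4_p1 (G : R -> R -> R -> R -> R) x y p1 p2 l :=
  derivable_pt_lim (fun t => G x y t p2) p1 l.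
Definition d4_p2 (G : R -> R -> R -> R -> R) x y p1 p2 l :=
  derivable_pt_lim (fun t => G x y p1 t) p2 l.

(* {H,F} = 0 at (x,y,p1,p2): whatever the (unique) partial derivatives are,
   H_x F_p1 - H_p1 F_x + H_y F_p2 - H_p2 F_y = 0. *)
Definition poisson_zero_at (H F : R -> R -> R -> R -> R) x y p1 p2 : Prop :=
  forall Hx Hy Hp1 Hp2 Fx Fy Fp1 Fp2,
    d4_x H x y p1 p2 Hx -> d4_y H x y p1 p2 Hy ->
    d4_p1 H x y p1 p2 Hp1 -> d4_p2 H x y p1 p2 Hp2 ->
    d4_x F x y p1 p2 Fx -> d4_y F x y p1 p2 Fy ->
    d4_p1 F x y p1 p2 Fp1 -> d4_p2 F x y p1 p2 Fp2 ->
    (Hx * Fp1 - Hp1 * Fx) + (Hy * Fp2 - Hp2 * Fy) = 0.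

Definition div_zero_at (G K : R -> R -> R) (x y : R) : Prop :=
  exists d1 d2, has_dx G x y d1 /\ has_dy K x y d2 /\ d1 + d2 = 0.

(* At p = (1, t) write A(t) = F(x,y,1,t) = sum_m a_m t^m and
   E(t) = F_p1(x,y,1,t) = sum_m (n - m) a_m t^m.  Multiplying {H,F} = 0 by -2 Lambda^2
   gives the polynomial identity in t
     Q(t) = (1 + t^2) (Lambda_x E + Lambda_y A') + 2 Lambda (A_x + t A_y) = 0,
   so all coefficients of Q vanish and Q'(i) = 0, the factor 1 + t^2 killing the
   second-order terms.  The hypotheses on a_(n-1) and a_n say exactly that
   A(i) = i^n (c2 - i c1) is constant on Om, hence A_x(i) = A_y(i) = 0.  With Euler's
   identity E + t A' = n A, the equation Q'(i) = 0 becomes the complex equation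
     (Lambda E(i))_x + i (Lambda (E(i) - n A(i)))_y = 0,
   whose real and imaginary parts are two divergence-form equations
   ([divergence_equations]).  The sums S_e, S_o (n even) and T_e, T_o (n odd) of the
   statement are Re E(i) and Im E(i) up to the constants Re A(i), Im A(i). *)

From Stdlib Require Import Reals List Arith Lra Lia ClassicalEpsilon.
From Coquelicot Require Import Complex.
Open Scope R_scope.

Lemma sumR_ext N f g : (forall m, (m < N)%nat -> f m = g m) -> sumR N f = sumR N g.
Proof.
  induction N as [|N IH]; intros Hfg; simpl; [reflexivity|].
  rewrite IH by (intros m Hm; apply Hfg; lia). rewrite (Hfg N) by lia. reflexivity.
Qed.

Lemma sumR_plus N f g : sumR N (fun m => f m + g m) = sumR N f + sumR N g.
Proof. induction N as [|N IH]; simpl; [ring|]. rewrite IH. ring. Qed.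

Lemma sumR_opp N f : sumR N (fun m => - f m) = - sumR N f.
Proof. induction N as [|N IH]; simpl; [ring|]. rewrite IH. ring. Qed.

Lemma sumR_front N f : sumR (S N) f = f O + sumR N (fun j => f (S j)).
Proof. induction N as [|N IH]; simpl in *; [ring|]. rewrite IH. ring. Qed.

Lemma sumR_tail_zero N M f : (N <= M)%nat ->
  (forall m, (N <= m)%nat -> (m < M)%nat -> f m = 0) -> sumR M f = sumR N f.
Proof.
  induction M as [|M IH]; intros HNM Hf; [replace N with 0%nat by lia; reflexivity|].
  destruct (Nat.eq_dec N (S M)) as [->|HN]; [reflexivity|].
  simpl. rewrite (Hf M) by lia.
  rewrite IH; [ring | lia | intros m Hm Hm'; apply Hf; lia].
Qed.

(** [top_alt g m = g m - g (m-2) + g (m-4) - ...]; the hypotheses on [a_(n-1)]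
    and [a_n] say exactly that [top_alt a (n-1) = c1] and [top_alt a n = c2]. *)

Fixpoint top_alt (g : nat -> R) (m : nat) : R :=
  match m with
  | O => g O
  | S O => g 1%nat
  | S (S m') => g (S (S m')) - top_alt g m'
  end.

Lemma top_alt_sum N K g : (K < 2 * N)%nat ->
  sumR N (fun j => if (2 * j <=? K)%nat then (-1) ^ j * g (K - 2 * j)%nat else 0)
  = top_alt g K.
Proof.
  revert N. induction K as [K IH] using lt_wf_ind. intros [|N] HK; [lia|].
  rewrite sumR_front.
  replace (2 * 0 <=? K)%nat with true by (symmetry; apply Nat.leb_le; lia).
  simpl ((-1) ^ 0). rewrite Nat.sub_0_r, Rmult_1_l.
  destruct K as [|[|K]].
  - rewrite (sumR_tail_zero 0 N); [simpl; ring | lia | intros m _ _].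
    replace (2 * S m <=? 0)%nat with false by (symmetry; apply Nat.leb_gt; lia). reflexivity.
  - rewrite (sumR_tail_zero 0 N); [simpl; ring | lia | intros m _ _].
    replace (2 * S m <=? 1)%nat with false by (symmetry; apply Nat.leb_gt; lia). reflexivity.
  - simpl top_alt. rewrite <- (IH K ltac:(lia) N ltac:(lia)). unfold Rminus.
    rewrite <- sumR_opp. f_equal. apply sumR_ext. intros j _.
    replace (2 * S j <=? S (S K))%nat with (2 * j <=? K)%nat
      by (apply Bool.eq_iff_eq_true; rewrite !Nat.leb_le; lia).
    destruct (2 * j <=? K)%nat; [|ring].
    replace (S (S K) - 2 * S j)%nat with (K - 2 * j)%nat by lia. simpl. ring.
Qed.

Lemma top_alt_of_constraint N M K g c : M = (K + 2)%nat -> (K < 2 * N)%nat ->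
  g M = c + sumR N (fun j => if (2 * j <=? K)%nat then (-1) ^ j * g (K - 2 * j)%nat else 0) ->
  top_alt g M = c.
Proof.
  intros -> HK Hg. rewrite top_alt_sum in Hg by exact HK.
  replace (K + 2)%nat with (S (S K)) in * by lia. simpl. rewrite Hg. ring.
Qed.

(** Polynomials in one variable as coefficient lists (constant term first) *)

Fixpoint ladd (l1 l2 : list R) : list R :=
  match l1, l2 with
  | nil, _ => l2
  | _, nil => l1
  | c1 :: l1', c2 :: l2' => (c1 + c2) :: ladd l1' l2'
  end.

Definition lscal (c : R) (l : list R) : list R := map (Rmult c) l.

(* Formal derivative: (c + t q(t))' = q(t) + t q'(t). *)
Fixpoint lD (l : list R) : list R :=
  match l with nil => nil | _ :: l' => ladd l' (0 :: lD l') end.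

(* Real evaluation (used for calculus in t) and complex evaluation (used at t = i). *)
Fixpoint evR (t : R) (l : list R) : R :=
  match l with nil => 0 | c :: l' => c + t * evR t l' end.

Fixpoint peval (z : C) (l : list R) : C :=
  match l with nil => RtoC 0 | c :: l' => (RtoC c + z * peval z l')%C end.

(* The polynomial sum_(m <= n) g m t^m, and its "Euler companion"
   sum_(m <= n) (n - m) g m t^m (the p1-derivative of the homogeneous form at p1 = 1). *)
Definition coeffs (n : nat) (g : nat -> R) : list R := map g (seq 0 (S n)).
Definition euler_coeffs (n : nat) (g : nat -> R) : list R :=
  coeffs n (fun m => INR (n - m) * g m).

Lemma coeffs_S n g : coeffs (S n) g = coeffs n g ++ g (S n) :: nil.
Proof. unfold coeffs. rewrite seq_S, map_app. reflexivity. Qed.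

Lemma coeffs_length n g : length (coeffs n g) = S n.
Proof. unfold coeffs. rewrite length_map, length_seq. reflexivity. Qed.

Lemma evR_add t l1 l2 : evR t (ladd l1 l2) = evR t l1 + evR t l2.
Proof.
  revert l2; induction l1 as [|c1 l1 IH]; intros [|c2 l2]; simpl; try ring.
  rewrite IH. ring.
Qed.

Lemma evR_scal t c l : evR t (lscal c l) = c * evR t l.
Proof.
  induction l as [|d l IH]; [simpl; ring|].
  change (lscal c (d :: l)) with (c * d :: lscal c l). simpl evR. rewrite IH. ring.
Qed.

Lemma evR_app t l c : evR t (l ++ c :: nil) = evR t l + c * t ^ length l.
Proof. induction l as [|d l IH]; simpl; [ring|]. rewrite IH. ring. Qed.

Lemma evR_coeffs t n g : evR t (coeffs n g) = sumR (S n) (fun m => g m * t ^ m).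
Proof.
  induction n as [|n IH]; [simpl; ring|].
  rewrite coeffs_S, evR_app, IH, coeffs_length. reflexivity.
Qed.

Lemma peval_add z l1 l2 : peval z (ladd l1 l2) = (peval z l1 + peval z l2)%C.
Proof.
  revert l2; induction l1 as [|c1 l1 IH]; intros [|c2 l2]; simpl; try ring.
  rewrite IH, RtoC_plus. ring.
Qed.

Lemma peval_scal z c l : peval z (lscal c l) = (RtoC c * peval z l)%C.
Proof.
  induction l as [|d l IH]; [simpl; ring|].
  change (lscal c (d :: l)) with (c * d :: lscal c l). simpl peval. rewrite IH, RtoC_mult. ring.
Qed.

Lemma peval_app z l c : peval z (l ++ c :: nil) = (peval z l + RtoC c * z ^ length l)%C.
Proof. induction l as [|d l IH]; simpl; [ring|]. rewrite IH. ring. Qed.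

Lemma peval_lD_cons z c l : peval z (lD (c :: l)) = (peval z l + z * peval z (lD l))%C.
Proof. simpl lD. rewrite peval_add. simpl. ring. Qed.

Lemma peval_lD_add z l1 l2 : peval z (lD (ladd l1 l2)) = (peval z (lD l1) + peval z (lD l2))%C.
Proof.
  revert l2; induction l1 as [|c1 l1 IH]; intros [|c2 l2]; simpl ladd; try (simpl; ring).
  rewrite !peval_lD_cons, peval_add, IH. ring.
Qed.

Lemma peval_lD_scal z c l : peval z (lD (lscal c l)) = (RtoC c * peval z (lD l))%C.
Proof.
  induction l as [|d l IH]; [simpl; ring|].
  change (lscal c (d :: l)) with (c * d :: lscal c l).
  rewrite !peval_lD_cons, peval_scal, IH. ring.
Qed.

(* Derivative of a polynomial with one more top coefficient (multiplied by z to avoid [pred]). *)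
Lemma peval_lD_app z l c :
  (z * peval z (lD (l ++ c :: nil)))%C
  = (z * peval z (lD l) + RtoC (INR (length l)) * RtoC c * z ^ length l)%C.
Proof.
  induction l as [|d l IH]; [simpl; ring|].
  simpl app. rewrite !peval_lD_cons, peval_app, Cmult_plus_distr_l, IH.
  simpl length. rewrite S_INR, RtoC_plus. simpl Cpow. ring.
Qed.

(* Euler's identity for a homogeneous polynomial of degree n, dehomogenised at p1 = 1:
   E(t) + t A'(t) = n A(t). *)
Lemma euler_identity z n g :
  (peval z (euler_coeffs n g) + z * peval z (lD (coeffs n g)))%C = (RtoC (INR n) * peval z (coeffs n g))%C.
Proof.
  unfold euler_coeffs.
  assert (Hpre : forall N, (N <= n)%nat ->
    (peval z (coeffs N (fun m => (INR (n - m) * g m)%R)) + z * peval z (lD (coeffs N g)))%C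
    = (RtoC (INR n) * peval z (coeffs N g))%C).
  { induction N as [|N IH]; intros HN.
    - simpl. rewrite Nat.sub_0_r, RtoC_mult. ring.
    - rewrite !coeffs_S, !peval_app, peval_lD_app, !coeffs_length.
      replace (RtoC (INR n) * (peval z (coeffs N g) + RtoC (g (S N)) * z ^ S N))%C
        with (RtoC (INR n) * peval z (coeffs N g) + RtoC (INR n) * RtoC (g (S N)) * z ^ S N)%C by ring.
      rewrite <- IH by lia.
      rewrite minus_INR by lia. rewrite RtoC_mult, RtoC_minus. ring. }
  apply Hpre. lia.
Qed.

Lemma Ci_sq : (Ci * Ci = - RtoC 1)%C.
Proof. apply injective_projections; simpl; ring. Qed.

Lemma Ci_pow_even j : (Ci ^ (2 * j))%C = RtoC ((-1) ^ j).
Proof.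
  induction j as [|j IH]; [reflexivity|].
  replace (2 * S j)%nat with (S (S (2 * j))) by lia.
  change (Ci * (Ci * Ci ^ (2 * j)) = RtoC ((-1) ^ S j))%C. rewrite IH.
  apply injective_projections; simpl; ring.
Qed.

Lemma Ci_pow_odd j : (Ci ^ S (2 * j))%C = (Ci * RtoC ((-1) ^ j))%C.
Proof. change (Ci * Ci ^ (2 * j) = Ci * RtoC ((-1) ^ j))%C. rewrite Ci_pow_even. reflexivity. Qed.

Lemma peval_i_top_alt g m :
  peval Ci (coeffs (S m) g) = (Ci ^ S m * (RtoC (top_alt g (S m)) - Ci * RtoC (top_alt g m)))%C.
Proof.
  induction m as [|m IH].
  - simpl. ring [Ci_sq].
  - rewrite coeffs_S, peval_app, IH, coeffs_length.
    change (top_alt g (S (S m))) with (g (S (S m)) - top_alt g m).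
    rewrite RtoC_minus. simpl Cpow. ring [Ci_sq].
Qed.

(* Under the hypotheses on a_(n-1) and a_n, the value A(i) = F(1, i) is the constant
   alpha0 = i^n (c2 - i c1). *)
Definition alpha0 (n : nat) (c1 c2 : R) : C := (Ci ^ n * (RtoC c2 - Ci * RtoC c1))%C.

Lemma peval_i_of_constraints n g c1 c2 : (3 <= n)%nat ->
  g (n - 1)%nat = c1 + sumR n (fun j =>
    if (2 * j <=? n - 3)%nat then (-1) ^ j * g (n - 3 - 2 * j)%nat else 0) ->
  g n = c2 + sumR n (fun j =>
    if (2 * j <=? n - 2)%nat then (-1) ^ j * g (n - 2 - 2 * j)%nat else 0) ->
  peval Ci (coeffs n g) = alpha0 n c1 c2.
Proof.
  intros Hn Hc1 Hc2. destruct n as [|m]; [lia|].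
  apply top_alt_of_constraint in Hc1; [|lia|lia].
  apply top_alt_of_constraint in Hc2; [|lia|lia].
  replace (S m - 1)%nat with m in Hc1 by lia.
  rewrite peval_i_top_alt, Hc1, Hc2. reflexivity.
Qed.

Lemma re_peval_i_coeffs n g : Re (peval Ci (coeffs n g)) = sumR (S n) (fun m => g m * Re (Ci ^ m)).
Proof.
  induction n as [|n IH]; [simpl; ring|].
  rewrite coeffs_S, peval_app, re_plus, re_scal_l, IH, coeffs_length. reflexivity.
Qed.

Lemma im_peval_i_coeffs n g : Im (peval Ci (coeffs n g)) = sumR (S n) (fun m => g m * Im (Ci ^ m)).
Proof.
  induction n as [|n IH]; [simpl; ring|].
  rewrite coeffs_S, peval_app, im_plus, im_scal_l, IH, coeffs_length. reflexivity.
Qed.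

Lemma parity_sums K h :
  sumR (2 * K) (fun m => h m * Re (Ci ^ m)) = sumR K (fun j => (-1) ^ j * h (2 * j)%nat) /\
  sumR (2 * K) (fun m => h m * Im (Ci ^ m)) = sumR K (fun j => (-1) ^ j * h (S (2 * j))).
Proof.
  induction K as [|K [IHre IHim]]; [split; reflexivity|].
  replace (2 * S K)%nat with (S (S (2 * K))) by lia. cbn [sumR].
  rewrite IHre, IHim, Ci_pow_odd, Ci_pow_even. simpl. split; ring.
Qed.

(* The parts of E(i); the weights (n - m) vanish for m >= n, so any K with n <= 2K works. *)
Lemma euler_parts_at_i K n g : (n <= 2 * K)%nat ->
  Re (peval Ci (euler_coeffs n g)) = sumR K (fun j => (-1) ^ j * (INR (n - 2 * j) * g (2 * j)%nat)) /\
  Im (peval Ci (euler_coeffs n g)) = sumR K (fun j => (-1) ^ j * (INR (n - S (2 * j)) * g (S (2 * j)))).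
Proof.
  intros HK. unfold euler_coeffs. rewrite re_peval_i_coeffs, im_peval_i_coeffs.
  assert (Hvan : forall m, (n <= m)%nat -> INR (n - m) = 0)
    by (intros m Hm; replace (n - m)%nat with 0%nat by lia; reflexivity).
  rewrite !(sumR_tail_zero n (S n)), <- !(sumR_tail_zero n (2 * K));
    try (intros m Hm _; rewrite Hvan by exact Hm; ring); try lia.
  apply parity_sums.
Qed.

Lemma im_coeffs_even_at_i k g :
  Im (peval Ci (coeffs (2 * k) g)) = sumR k (fun j => (-1) ^ j * g (S (2 * j))).
Proof.
  rewrite im_peval_i_coeffs, (sumR_tail_zero (2 * k)); [apply parity_sums | lia |].
  intros m Hm Hm'. replace m with (2 * k)%nat by lia. rewrite Ci_pow_even. simpl. ring.
Qed.

Lemma re_coeffs_odd_at_i k g :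
  Re (peval Ci (coeffs (2 * k + 1) g)) = sumR (S k) (fun j => (-1) ^ j * g (2 * j)%nat).
Proof.
  rewrite re_peval_i_coeffs. replace (S (2 * k + 1)) with (2 * S k)%nat by lia.
  apply parity_sums.
Qed.

Lemma alpha0_even n k c1 c2 : n = (2 * k)%nat ->
  Re (alpha0 n c1 c2) = (-1) ^ k * c2 /\ Im (alpha0 n c1 c2) = (-1) ^ (k + 1) * c1.
Proof.
  intros ->. unfold alpha0. rewrite Ci_pow_even, pow_add. simpl. split; ring.
Qed.

Lemma alpha0_odd n k c1 c2 : n = (2 * k + 1)%nat ->
  Re (alpha0 n c1 c2) = (-1) ^ k * c1 /\ Im (alpha0 n c1 c2) = (-1) ^ k * c2.
Proof.
  intros ->. unfold alpha0. rewrite Nat.add_1_r, Ci_pow_odd. simpl. split; ring.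
Qed.

Lemma even_case_sums n k c1 c2 g : n = (2 * k)%nat -> (1 <= k)%nat ->
  peval Ci (coeffs n g) = alpha0 n c1 c2 ->
  sumR k (fun j => (-1) ^ j * INR (n - 2 * j) * g (2 * j)%nat) = Re (peval Ci (euler_coeffs n g)) /\
  sumR (k - 1) (fun j => (-1) ^ j * INR (n - 2 - 2 * j) * g (2 * j + 1)%nat) + (-1) ^ (k + 1) * c1
    = Im (peval Ci (euler_coeffs n g)).
Proof.
  intros Hn Hk Halpha.
  destruct (euler_parts_at_i k n g) as [ERe EIm]; [lia|].
  rewrite ERe, EIm. split; [apply sumR_ext; intros; ring|].
  rewrite <- (proj2 (alpha0_even n k c1 c2 Hn)), <- Halpha, Hn, im_coeffs_even_at_i, <- Hn.
  rewrite <- (sumR_tail_zero (k - 1) k), <- sumR_plus; [| lia |].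
  - apply sumR_ext. intros j Hj.
    replace (n - S (2 * j))%nat with (S (n - 2 - 2 * j)) by lia.
    rewrite S_INR, Nat.add_1_r. ring.
  - intros j Hj Hj'. replace (n - 2 - 2 * j)%nat with 0%nat by lia. simpl. ring.
Qed.

Lemma odd_case_sums n k c1 c2 g : n = (2 * k + 1)%nat ->
  peval Ci (coeffs n g) = alpha0 n c1 c2 ->
  sumR k (fun j => (-1) ^ j * INR (n - 1 - 2 * j) * g (2 * j)%nat) + (-1) ^ k * c1
    = Re (peval Ci (euler_coeffs n g)) /\
  sumR k (fun j => (-1) ^ j * INR (n - 1 - 2 * j) * g (2 * j + 1)%nat)
    = Im (peval Ci (euler_coeffs n g)).
Proof.
  intros Hn Halpha.
  destruct (euler_parts_at_i (S k) n g) as [ERe EIm]; [lia|].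
  rewrite ERe, EIm. split.
  - rewrite <- (proj1 (alpha0_odd n k c1 c2 Hn)), <- Halpha, Hn, re_coeffs_odd_at_i, <- Hn.
    rewrite <- (sumR_tail_zero k (S k)), <- sumR_plus; [| lia |].
    + apply sumR_ext. intros j Hj.
      replace (n - 2 * j)%nat with (S (n - 1 - 2 * j)) by lia. rewrite S_INR. ring.
    + intros j Hj Hj'. replace (n - 1 - 2 * j)%nat with 0%nat by lia. simpl. ring.
  - rewrite (sumR_tail_zero k (S k)); [| lia |].
    + apply sumR_ext. intros j Hj.
      replace (n - S (2 * j))%nat with (n - 1 - 2 * j)%nat by lia. rewrite Nat.add_1_r. ring.
    + intros j Hj Hj'. replace (n - S (2 * j))%nat with 0%nat by lia. simpl. ring.
Qed.

Lemma derivable_pt_lim_eq f x l l' : derivable_pt_lim f x l -> l = l' -> derivable_pt_lim f x l'.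
Proof. intros H <-. exact H. Qed.

Lemma derivable_pt_lim_local f g x l r : 0 < r ->
  (forall t, Rabs (t - x) < r -> f t = g t) -> derivable_pt_lim f x l -> derivable_pt_lim g x l.
Proof.
  intros Hr Hfg Hf eps Heps. destruct (Hf eps Heps) as [del Hdel].
  assert (Hm : 0 < Rmin del r) by (apply Rmin_pos; [apply cond_pos | lra]).
  exists (mkposreal _ Hm). intros h Hh0 Hh. simpl in Hh.
  rewrite <- !Hfg.
  - apply Hdel; [exact Hh0 | apply Rlt_le_trans with (1 := Hh), Rmin_l].
  - rewrite Rminus_diag, Rabs_R0. exact Hr.
  - replace (x + h - x) with h by ring. apply Rlt_le_trans with (1 := Hh), Rmin_r.
Qed.

Lemma derivable_pt_lim_sumR N (f : nat -> R -> R) (d : nat -> R) x :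
  (forall m, (m < N)%nat -> derivable_pt_lim (f m) x (d m)) ->
  derivable_pt_lim (fun t => sumR N (fun m => f m t)) x (sumR N d).
Proof.
  induction N as [|N IH]; intros Hd; simpl.
  - apply derivable_pt_lim_const.
  - apply (derivable_pt_lim_plus (fun t => sumR N (fun m => f m t)) (f N)).
    + apply IH. intros m Hm. apply Hd. lia.
    + apply Hd. lia.
Qed.

Lemma evR_deriv l t : derivable_pt_lim (fun s => evR s l) t (evR t (lD l)).
Proof.
  induction l as [|c l IH]; simpl.
  - apply derivable_pt_lim_const.
  - rewrite evR_add. simpl evR. eapply derivable_pt_lim_eq.
    + apply (derivable_pt_lim_plus (fun _ => c) (fun s => s * evR s l)).
      * apply derivable_pt_lim_const.
      * apply (derivable_pt_lim_mult (fun s => s) (fun s => evR s l)); [apply derivable_pt_lim_id | exact IH].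
    + ring.
Qed.

Lemma vanishing_poly_coeffs l : (forall t, evR t l = 0) -> Forall (fun c => c = 0) l.
Proof.
  induction l as [|c l IH]; intros H; constructor.
  - specialize (H 0). simpl in H. lra.
  - apply IH. intros t.
    assert (Hc : c = 0) by (specialize (H 0); simpl in H; lra).
    destruct (Req_dec t 0) as [->|Ht].
    + (* t q(t) vanishes identically, so its derivative q(0) at 0 is 0 *)
      assert (Hd : derivable_pt_lim (fun s => evR s (c :: l)) 0 0).
      { apply (derivable_pt_lim_local (fun _ => 0) _ 0 0 1); [lra | intros s _; symmetry; apply H |].
        apply derivable_pt_lim_const. }
      pose proof (uniqueness_limite _ _ _ _ (evR_deriv (c :: l) 0) Hd) as E.
      simpl lD in E. rewrite evR_add in E. simpl in E. lra.
    + specialize (H t). simpl in H. rewrite Hc in H. apply (Rmult_eq_reg_l t); lra.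
Qed.

Lemma vanishing_poly_derivative l z : (forall t, evR t l = 0) -> peval z (lD l) = RtoC 0.
Proof.
  intros H.
  assert (HD : forall t, evR t (lD l) = 0).
  { intros t. apply (uniqueness_limite (fun s => evR s l) t); [apply evR_deriv |].
    apply (derivable_pt_lim_local (fun _ => 0) _ t 0 1); [lra | intros s _; symmetry; apply H |].
    apply derivable_pt_lim_const. }
  apply vanishing_poly_coeffs in HD. induction HD as [|c l' Hc _ IH]; [reflexivity|].
  simpl. rewrite Hc, IH. ring.
Qed.

(** The Poisson bracket at (p1, p2) = (1, t) as a polynomial in t

    With L = Lambda, A(t) = F(x,y,1,t), E(t) = F_p1(x,y,1,t) and X, Y the
    x- and y-derivatives of A, the identity -2 L^2 {H,F} = 0 at p = (1,t) reads
      Q(t) := (1 + t^2) (L_x E(t) + L_y A'(t)) + 2 L (X(t) + t Y(t)) = 0. *)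

Definition one_plus_sq (l : list R) : list R := ladd l (0 :: 0 :: l).

Definition poisson_poly (Lx Ly L : R) (E A1 Xl Yl : list R) : list R :=
  ladd (one_plus_sq (ladd (lscal Lx E) (lscal Ly A1))) (lscal (2 * L) (ladd Xl (0 :: Yl))).

Lemma evR_poisson_poly t Lx Ly L E A1 Xl Yl :
  evR t (poisson_poly Lx Ly L E A1 Xl Yl)
  = (1 + t ^ 2) * (Lx * evR t E + Ly * evR t A1) + 2 * L * (evR t Xl + t * evR t Yl).
Proof.
  unfold poisson_poly, one_plus_sq.
  rewrite !evR_add, !evR_scal, evR_add. simpl evR. rewrite evR_add, !evR_scal. ring.
Qed.

(* Q'(i) = 2i (L_x E(i) + L_y A'(i)) + 2 L (X'(i) + Y(i) + i Y'(i)), since 1 + i^2 = 0. *)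
Lemma peval_lD_poisson_poly_at_i Lx Ly L E A1 Xl Yl :
  peval Ci (lD (poisson_poly Lx Ly L E A1 Xl Yl))
  = (RtoC 2 * (Ci * (RtoC Lx * peval Ci E + RtoC Ly * peval Ci A1)
      + RtoC L * (peval Ci (lD Xl) + peval Ci Yl + Ci * peval Ci (lD Yl))))%C.
Proof.
  unfold poisson_poly, one_plus_sq.
  repeat rewrite ?peval_lD_add, ?peval_lD_cons, ?peval_lD_scal, ?peval_add, ?peval_scal.
  simpl peval. rewrite peval_add, !peval_scal, RtoC_mult. ring [Ci_sq].
Qed.

Lemma Ham_partials Lam x y Lx Ly p1 p2 : Lam x y <> 0 ->
  has_dx Lam x y Lx -> has_dy Lam x y Ly ->
  d4_x (Ham Lam) x y p1 p2 (- (p1 ^ 2 + p2 ^ 2) * Lx / (2 * Lam x y ^ 2)) /\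
  d4_y (Ham Lam) x y p1 p2 (- (p1 ^ 2 + p2 ^ 2) * Ly / (2 * Lam x y ^ 2)) /\
  d4_p1 (Ham Lam) x y p1 p2 (p1 / Lam x y) /\
  d4_p2 (Ham Lam) x y p1 p2 (p2 / Lam x y).
Proof.
  intros HL HLx HLy. unfold d4_x, d4_y, d4_p1, d4_p2, Ham.
  assert (H2L : 2 * Lam x y <> 0) by lra.
  repeat split; eapply derivable_pt_lim_eq.
  - apply (derivable_pt_lim_div (fun _ => p1 ^ 2 + p2 ^ 2) (fun t => 2 * Lam t y));
      [apply derivable_pt_lim_const | apply derivable_pt_lim_scal, HLx | exact H2L].
  - unfold Rsqr. field. exact HL.
  - apply (derivable_pt_lim_div (fun _ => p1 ^ 2 + p2 ^ 2) (fun t => 2 * Lam x t));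
      [apply derivable_pt_lim_const | apply derivable_pt_lim_scal, HLy | exact H2L].
  - unfold Rsqr. field. exact HL.
  - apply (derivable_pt_lim_div (fun t => t ^ 2 + p2 ^ 2) (fun _ => 2 * Lam x y));
      [apply (derivable_pt_lim_plus (fun t => t ^ 2)); [apply derivable_pt_lim_pow | apply derivable_pt_lim_const]
      | apply derivable_pt_lim_const | exact H2L].
  - unfold Rsqr. simpl. field. exact HL.
  - apply (derivable_pt_lim_div (fun t => p1 ^ 2 + t ^ 2) (fun _ => 2 * Lam x y));
      [apply (derivable_pt_lim_plus (fun _ => p1 ^ 2)); [apply derivable_pt_lim_const | apply derivable_pt_lim_pow]
      | apply derivable_pt_lim_const | exact H2L].
  - unfold Rsqr. simpl. field. exact HL.
Qed.

Lemma Fpoly_at_1 n a x y t : Fpoly n a x y 1 t = evR t (coeffs n (fun m => a m x y)).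
Proof.
  unfold Fpoly. rewrite evR_coeffs. apply sumR_ext. intros m _. rewrite pow1. ring.
Qed.

Lemma Fpoly_partials_at_1 n a x y X Y t :
  (forall i, (i <= n)%nat -> has_dx (a i) x y (X i)) ->
  (forall i, (i <= n)%nat -> has_dy (a i) x y (Y i)) ->
  d4_x (Fpoly n a) x y 1 t (evR t (coeffs n X)) /\
  d4_y (Fpoly n a) x y 1 t (evR t (coeffs n Y)) /\
  d4_p1 (Fpoly n a) x y 1 t (evR t (euler_coeffs n (fun m => a m x y))) /\
  d4_p2 (Fpoly n a) x y 1 t (evR t (lD (coeffs n (fun m => a m x y)))).
Proof.
  intros HX HY. unfold d4_x, d4_y, d4_p1, d4_p2, euler_coeffs. rewrite !evR_coeffs.
  repeat split.
  - unfold Fpoly. apply derivable_pt_lim_sumR. intros m Hm. eapply derivable_pt_lim_eq.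
    + apply (derivable_pt_lim_mult (fun s => a m s y * 1 ^ (n - m)) (fun _ => t ^ m));
        [apply (derivable_pt_lim_mult (fun s => a m s y) (fun _ => 1 ^ (n - m)));
           [apply HX; lia | apply derivable_pt_lim_const] | apply derivable_pt_lim_const].
    + rewrite !pow1. ring.
  - unfold Fpoly. apply derivable_pt_lim_sumR. intros m Hm. eapply derivable_pt_lim_eq.
    + apply (derivable_pt_lim_mult (fun s => a m x s * 1 ^ (n - m)) (fun _ => t ^ m));
        [apply (derivable_pt_lim_mult (fun s => a m x s) (fun _ => 1 ^ (n - m)));
           [apply HY; lia | apply derivable_pt_lim_const] | apply derivable_pt_lim_const].
    + rewrite !pow1. ring.
  - unfold Fpoly. apply derivable_pt_lim_sumR. intros m Hm. eapply derivable_pt_lim_eq.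
    + apply (derivable_pt_lim_mult (fun s => a m x y * s ^ (n - m)) (fun _ => t ^ m));
        [apply (derivable_pt_lim_mult (fun _ => a m x y) (fun s => s ^ (n - m)));
           [apply derivable_pt_lim_const | apply derivable_pt_lim_pow] | apply derivable_pt_lim_const].
    + rewrite !pow1. ring.
  - apply (derivable_pt_lim_local (fun s => evR s (coeffs n (fun m => a m x y))) _ t _ 1);
      [lra | intros s _; symmetry; apply Fpoly_at_1 | apply evR_deriv].
Qed.

Lemma poisson_poly_vanishes n a Lam x y Lx Ly X Y :
  Lam x y <> 0 -> has_dx Lam x y Lx -> has_dy Lam x y Ly ->
  (forall i, (i <= n)%nat -> has_dx (a i) x y (X i)) ->
  (forall i, (i <= n)%nat -> has_dy (a i) x y (Y i)) ->
  (forall p1 p2, poisson_zero_at (Ham Lam) (Fpoly n a) x y p1 p2) ->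
  forall t, evR t (poisson_poly Lx Ly (Lam x y) (euler_coeffs n (fun m => a m x y))
                  (lD (coeffs n (fun m => a m x y))) (coeffs n X) (coeffs n Y)) = 0.
Proof.
  intros HL HLx HLy HX HY HP t.
  destruct (Ham_partials Lam x y Lx Ly 1 t HL HLx HLy) as (Hx & Hy & Hp1 & Hp2).
  destruct (Fpoly_partials_at_1 n a x y X Y t HX HY) as (Fx & Fy & Fp1 & Fp2).
  pose proof (HP 1 t _ _ _ _ _ _ _ _ Hx Hy Hp1 Hp2 Fx Fy Fp1 Fp2) as Hbr.
  rewrite evR_poisson_poly.
  match type of Hbr with ?b = 0 => transitivity (- (2 * Lam x y ^ 2) * b) end.
  - field. exact HL.
  - rewrite Hbr. ring.
Qed.

(** With A, E, X, Y as above and alpha = A(i):  Since Q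
    vanishes identically, Q'(i) = 0.  Combined with Euler's identity
    E + t A' = n A (for a, and for its partial derivatives), and with
    X(i) = Y(i) = 0, this becomes the complex first-order identity
      (L E(i))_x + i (L (E(i) - n alpha))_y = 0. *)

Lemma C_half_zero (w : C) : (RtoC 2 * w)%C = RtoC 0 -> w = RtoC 0.
Proof.
  destruct w as [u v]. intros H. injection H as Hu Hv.
  apply injective_projections; simpl in *; lra.
Qed.

(* The algebra behind the key identity: eliminate A'(i), X'(i), Y'(i) using Euler's
   identity (for A, X, Y) and X(i) = Y(i) = 0, then use i^2 = -1. *)
Lemma key_identity_algebra (Lx Ly L nR : R) (alpha beta A1 ex X1 ey Y1 ax ay : C) :
  (Ci * (RtoC Lx * beta + RtoC Ly * A1) + RtoC L * (X1 + ay + Ci * Y1))%C = RtoC 0 ->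
  (beta + Ci * A1 = RtoC nR * alpha)%C ->
  (ex + Ci * X1 = RtoC nR * ax)%C -> (ey + Ci * Y1 = RtoC nR * ay)%C ->
  ax = RtoC 0 -> ay = RtoC 0 ->
  (RtoC Lx * beta + RtoC L * ex + Ci * (RtoC Ly * (beta - RtoC nR * alpha) + RtoC L * ey))%C = RtoC 0.
Proof.
  intros H EA EX EY -> ->.
  transitivity (- Ci * (Ci * (RtoC Lx * beta + RtoC Ly * A1) + RtoC L * (X1 + RtoC 0 + Ci * Y1))
    + RtoC L * (ex + Ci * X1 - RtoC nR * RtoC 0) + Ci * RtoC L * (ey + Ci * Y1 - RtoC nR * RtoC 0)
    + Ci * RtoC Ly * (beta + Ci * A1 - RtoC nR * alpha))%C; [ring [Ci_sq] |].
  rewrite H, EA, EX, EY. ring.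
Qed.

Lemma key_identity n a Lam x y Lx Ly X Y alpha :
  Lam x y <> 0 -> has_dx Lam x y Lx -> has_dy Lam x y Ly ->
  (forall i, (i <= n)%nat -> has_dx (a i) x y (X i)) ->
  (forall i, (i <= n)%nat -> has_dy (a i) x y (Y i)) ->
  (forall p1 p2, poisson_zero_at (Ham Lam) (Fpoly n a) x y p1 p2) ->
  peval Ci (coeffs n X) = RtoC 0 -> peval Ci (coeffs n Y) = RtoC 0 ->
  peval Ci (coeffs n (fun m => a m x y)) = alpha ->
  let beta := peval Ci (euler_coeffs n (fun m => a m x y)) in
  (RtoC Lx * beta + RtoC (Lam x y) * peval Ci (euler_coeffs n X)
   + Ci * (RtoC Ly * (beta - RtoC (INR n) * alpha)
           + RtoC (Lam x y) * peval Ci (euler_coeffs n Y)))%C = RtoC 0.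
Proof.
  intros HL HLx HLy HX HY HP HX0 HY0 Halpha beta.
  pose proof (vanishing_poly_derivative _ Ci
    (poisson_poly_vanishes n a Lam x y Lx Ly X Y HL HLx HLy HX HY HP)) as HQ.
  rewrite peval_lD_poisson_poly_at_i in HQ. apply C_half_zero in HQ.
  eapply (key_identity_algebra _ _ _ _ _ _ _ _ _ _ _ _ _ HQ);
    [rewrite <- Halpha | | | exact HX0 | exact HY0]; apply euler_identity.
Qed.

Lemma key_identity_re_im (Lx Ly L nR : R) (alpha beta ex ey : C) :
  (RtoC Lx * beta + RtoC L * ex + Ci * (RtoC Ly * (beta - RtoC nR * alpha) + RtoC L * ey))%C = RtoC 0 ->
  Lx * Re beta + L * Re ex - Ly * (Im beta - nR * Im alpha) - L * Im ey = 0 /\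
  Lx * Im beta + L * Im ex + Ly * (Re beta - nR * Re alpha) + L * Re ey = 0.
Proof.
  destruct alpha, beta, ex, ey. intros H. injection H as Hre Him. simpl. split; lra.
Qed.

Lemma open2_lines Om x y : open2 Om -> Om x y ->
  exists r, 0 < r /\ (forall t, Rabs (t - x) < r -> Om t y) /\ (forall t, Rabs (t - y) < r -> Om x t).
Proof.
  intros Hop Hxy. destruct (Hop x y Hxy) as [r [Hr Hball]].
  exists r. repeat split; [exact Hr | |]; intros t Ht; apply Hball;
    apply Rabs_def2 in Ht; rewrite Rminus_diag; nra.
Qed.

Lemma constraint_derivative (h : nat -> R -> R) M K N c t0 r (d : nat -> R) : 0 < r ->
  (forall t, Rabs (t - t0) < r -> h M t = c + sumR N (fun j =>
     if (2 * j <=? K)%nat then (-1) ^ j * h (K - 2 * j)%nat t else 0)) ->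
  derivable_pt_lim (h M) t0 (d M) ->
  (forall i, (i <= K)%nat -> derivable_pt_lim (h i) t0 (d i)) ->
  d M = 0 + sumR N (fun j => if (2 * j <=? K)%nat then (-1) ^ j * d (K - 2 * j)%nat else 0).
Proof.
  intros Hr Hh HM Hd. apply (uniqueness_limite (h M) t0); [exact HM |].
  apply (derivable_pt_lim_local (fun t => c + sumR N (fun j =>
     if (2 * j <=? K)%nat then (-1) ^ j * h (K - 2 * j)%nat t else 0)) _ t0 _ r Hr);
    [intros t Ht; symmetry; apply Hh, Ht |].
  apply (derivable_pt_lim_plus (fun _ => c)); [apply derivable_pt_lim_const |].
  apply (derivable_pt_lim_sumR N (fun j t =>
     if (2 * j <=? K)%nat then (-1) ^ j * h (K - 2 * j)%nat t else 0)).
  intros j _. destruct (2 * j <=? K)%nat; [| apply derivable_pt_lim_const].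
  eapply derivable_pt_lim_eq;
    [apply (derivable_pt_lim_mult (fun _ => (-1) ^ j)); [apply derivable_pt_lim_const | apply Hd; lia] |].
  ring.
Qed.

(* Differentiating the hypotheses: the derivative of A along a line vanishes at t = i. *)
Lemma partials_vanish_at_i n (h : nat -> R -> R) c1 c2 t0 r (d : nat -> R) :
  (3 <= n)%nat -> 0 < r ->
  (forall t, Rabs (t - t0) < r -> h (n - 1)%nat t = c1 + sumR n (fun j =>
     if (2 * j <=? n - 3)%nat then (-1) ^ j * h (n - 3 - 2 * j)%nat t else 0)) ->
  (forall t, Rabs (t - t0) < r -> h n t = c2 + sumR n (fun j =>
     if (2 * j <=? n - 2)%nat then (-1) ^ j * h (n - 2 - 2 * j)%nat t else 0)) ->
  (forall i, (i <= n)%nat -> derivable_pt_lim (h i) t0 (d i)) ->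
  peval Ci (coeffs n d) = RtoC 0.
Proof.
  intros Hn Hr Hc1 Hc2 Hd.
  rewrite (peval_i_of_constraints n d 0 0 Hn); [unfold alpha0; ring | |];
    (eapply constraint_derivative; [exact Hr | eassumption | apply Hd; lia | intros i Hi; apply Hd; lia]).
Qed.

(* Chosen partial derivatives (they exist on Om by smoothness and are unique). *)
Definition dx_of (f : R -> R -> R) (x y : R) : R := epsilon (inhabits 0) (fun l => has_dx f x y l).
Definition dy_of (f : R -> R -> R) (x y : R) : R := epsilon (inhabits 0) (fun l => has_dy f x y l).

Lemma smooth_partials Om f x y : smooth_on Om f -> Om x y ->
  has_dx f x y (dx_of f x y) /\ has_dy f x y (dy_of f x y).
Proof.
  intros [D [HD0 HD]] Hxy. destruct (HD nil x y Hxy) as [Hdx [Hdy _]]. rewrite HD0 in Hdx, Hdy.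
  unfold dx_of, dy_of. split; apply epsilon_spec; eauto.
Qed.

Lemma div_zero_at_congr Om G K G' K' x y : open2 Om -> Om x y -> div_zero_at G' K' x y ->
  (forall u v, Om u v -> G u v = G' u v) -> (forall u v, Om u v -> K u v = K' u v) ->
  div_zero_at G K x y.
Proof.
  intros Hop Hxy [d1 [d2 [H1 [H2 Hsum]]]] HG HK.
  destruct (open2_lines Om x y Hop Hxy) as (r & Hr & Hlx & Hly).
  exists d1, d2. split; [| split; [| exact Hsum]].
  - apply (derivable_pt_lim_local (fun t => G' t y) _ x d1 r Hr); [| exact H1].
    intros t Ht. symmetry. apply HG, Hlx, Ht.
  - apply (derivable_pt_lim_local (fun t => K' x t) _ y d2 r Hr); [| exact H2].
    intros t Ht. symmetry. apply HK, Hly, Ht.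
Qed.

Lemma euler_at_i_deriv n (h : nat -> R -> R) (d : nat -> R) t0 :
  (forall m, (m <= n)%nat -> derivable_pt_lim (h m) t0 (d m)) ->
  derivable_pt_lim (fun t => Re (peval Ci (euler_coeffs n (fun m => h m t)))) t0
    (Re (peval Ci (euler_coeffs n d))) /\
  derivable_pt_lim (fun t => Im (peval Ci (euler_coeffs n (fun m => h m t)))) t0
    (Im (peval Ci (euler_coeffs n d))).
Proof.
  intros Hd. unfold euler_coeffs.
  assert (Hterm : forall (p : nat -> R) m, (m < S n)%nat ->
    derivable_pt_lim (fun t => INR (n - m) * h m t * p m) t0 (INR (n - m) * d m * p m)).
  { intros p m Hm. eapply derivable_pt_lim_eq.
    - apply (derivable_pt_lim_mult (fun t => INR (n - m) * h m t) (fun _ => p m));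
        [apply derivable_pt_lim_scal, Hd; lia | apply derivable_pt_lim_const].
    - ring. }
  rewrite re_peval_i_coeffs, im_peval_i_coeffs. split.
  - apply (derivable_pt_lim_local
      (fun t => sumR (S n) (fun m => INR (n - m) * h m t * Re (Ci ^ m))) _ t0 _ 1);
      [lra | intros t _; symmetry; apply re_peval_i_coeffs |].
    apply (derivable_pt_lim_sumR (S n) (fun m t => INR (n - m) * h m t * Re (Ci ^ m))).
    intros m Hm. apply (Hterm (fun m => Re (Ci ^ m))), Hm.
  - apply (derivable_pt_lim_local
      (fun t => sumR (S n) (fun m => INR (n - m) * h m t * Im (Ci ^ m))) _ t0 _ 1);
      [lra | intros t _; symmetry; apply im_peval_i_coeffs |].
    apply (derivable_pt_lim_sumR (S n) (fun m t => INR (n - m) * h m t * Im (Ci ^ m))).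
    intros m Hm. apply (Hterm (fun m => Im (Ci ^ m))), Hm.
Qed.

(* beta_i n a x y = F_p1(x, y, 1, i), the Euler polynomial of the coefficients at t = i. *)
Definition beta_i (n : nat) (a : nat -> R -> R -> R) (x y : R) : C :=
  peval Ci (euler_coeffs n (fun m => a m x y)).

Section DivergenceEquations.

Variables (n : nat) (Om : R -> R -> Prop) (Lam : R -> R -> R) (a : nat -> R -> R -> R) (c1 c2 : R).
Hypothesis Hn : (3 <= n)%nat.
Hypothesis Hop : open2 Om.
Hypothesis HsL : smooth_on Om Lam.
Hypothesis Hpos : forall x y, Om x y -> 0 < Lam x y.
Hypothesis Hsa : forall i, (i <= n)%nat -> smooth_on Om (a i).
Hypothesis HP : forall x y p1 p2, Om x y -> poisson_zero_at (Ham Lam) (Fpoly n a) x y p1 p2.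
Hypothesis Hc1 : forall x y, Om x y ->
  a (n - 1)%nat x y = c1 + sumR n (fun j =>
    if (2 * j <=? n - 3)%nat then (-1) ^ j * a (n - 3 - 2 * j)%nat x y else 0).
Hypothesis Hc2 : forall x y, Om x y ->
  a n x y = c2 + sumR n (fun j =>
    if (2 * j <=? n - 2)%nat then (-1) ^ j * a (n - 2 - 2 * j)%nat x y else 0).

Lemma key_identity_on_Om x y : Om x y ->
  (RtoC (dx_of Lam x y) * beta_i n a x y
   + RtoC (Lam x y) * peval Ci (euler_coeffs n (fun i => dx_of (a i) x y))
   + Ci * (RtoC (dy_of Lam x y) * (beta_i n a x y - RtoC (INR n) * alpha0 n c1 c2)
           + RtoC (Lam x y) * peval Ci (euler_coeffs n (fun i => dy_of (a i) x y))))%C = RtoC 0.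
Proof.
  intros Hxy.
  set (X := fun i => dx_of (a i) x y). set (Y := fun i => dy_of (a i) x y).
  destruct (smooth_partials Om Lam x y HsL Hxy) as [HLx HLy].
  assert (HX : forall i, (i <= n)%nat -> has_dx (a i) x y (X i))
    by (intros i Hi; apply (smooth_partials Om); auto).
  assert (HY : forall i, (i <= n)%nat -> has_dy (a i) x y (Y i))
    by (intros i Hi; apply (smooth_partials Om); auto).
  assert (HL : Lam x y <> 0) by (specialize (Hpos x y Hxy); lra).
  destruct (open2_lines Om x y Hop Hxy) as (r & Hr & Hlx & Hly).
  assert (HX0 : peval Ci (coeffs n X) = RtoC 0).
  { apply (partials_vanish_at_i n (fun i t => a i t y) c1 c2 x r X Hn Hr);
      [intros t Ht; apply Hc1, Hlx, Ht | intros t Ht; apply Hc2, Hlx, Ht | exact HX]. }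
  assert (HY0 : peval Ci (coeffs n Y) = RtoC 0).
  { apply (partials_vanish_at_i n (fun i t => a i x t) c1 c2 y r Y Hn Hr);
      [intros t Ht; apply Hc1, Hly, Ht | intros t Ht; apply Hc2, Hly, Ht | exact HY]. }
  assert (Halpha : peval Ci (coeffs n (fun m => a m x y)) = alpha0 n c1 c2)
    by (apply peval_i_of_constraints; auto).
  exact (key_identity n a Lam x y _ _ X Y _ HL HLx HLy HX HY (fun p1 p2 => HP x y p1 p2 Hxy) HX0 HY0 Halpha).
Qed.

Lemma divergence_equations x y : Om x y ->
  div_zero_at (fun x y => Re (beta_i n a x y) * Lam x y)
    (fun x y => (- Im (beta_i n a x y) + INR n * Im (alpha0 n c1 c2)) * Lam x y) x y /\
  div_zero_at (fun x y => Im (beta_i n a x y) * Lam x y)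
    (fun x y => (Re (beta_i n a x y) - INR n * Re (alpha0 n c1 c2)) * Lam x y) x y.
Proof.
  intros Hxy.
  destruct (key_identity_re_im _ _ _ _ _ _ _ _ (key_identity_on_Om x y Hxy)) as [Hre Him].
  destruct (smooth_partials Om Lam x y HsL Hxy) as [HLx HLy].
  destruct (euler_at_i_deriv n (fun m t => a m t y) (fun i => dx_of (a i) x y) x)
    as [Dre_x Dim_x]; [intros m Hm; apply (smooth_partials Om); auto |].
  destruct (euler_at_i_deriv n (fun m t => a m x t) (fun i => dy_of (a i) x y) y)
    as [Dre_y Dim_y]; [intros m Hm; apply (smooth_partials Om); auto |].
  assert (Dshift : forall f d c, derivable_pt_lim f y d ->
    derivable_pt_lim (fun t => - f t + c) y (- d + 0) /\ derivable_pt_lim (fun t => f t - c) y (d - 0)).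
  { intros f d c Hf. split.
    - apply (derivable_pt_lim_plus (fun t => - f t));
        [apply derivable_pt_lim_opp, Hf | apply derivable_pt_lim_const].
    - apply derivable_pt_lim_minus; [exact Hf | apply derivable_pt_lim_const]. }
  split; eexists _, _; (split; [| split]).
  - apply (derivable_pt_lim_mult (fun t => Re (beta_i n a t y)) (fun t => Lam t y) x);
      [exact Dre_x | exact HLx].
  - apply (derivable_pt_lim_mult (fun t => - Im (beta_i n a x t) + INR n * Im (alpha0 n c1 c2))
      (fun t => Lam x t) y); [apply Dshift, Dim_y | exact HLy].
  - unfold beta_i in *. lra.
  - apply (derivable_pt_lim_mult (fun t => Im (beta_i n a t y)) (fun t => Lam t y) x);
      [exact Dim_x | exact HLx].
  - apply (derivable_pt_lim_mult (fun t => Re (beta_i n a x t) - INR n * Re (alpha0 n c1 c2))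
      (fun t => Lam x t) y); [apply Dshift, Dre_y | exact HLy].
  - unfold beta_i in *. lra.
Qed.

End DivergenceEquations.

Theorem lemma1 (n : nat) (Om : R -> R -> Prop) (Lam : R -> R -> R)
  (a : nat -> R -> R -> R) (c1 c2 : R) :
  (3 <= n)%nat ->
  open2 Om ->
  smooth_on Om Lam ->
  (forall x y, Om x y -> 0 < Lam x y) ->
  (forall i, (i <= n)%nat -> smooth_on Om (a i)) ->
  (forall x y p1 p2, Om x y -> poisson_zero_at (Ham Lam) (Fpoly n a) x y p1 p2) ->
  (forall x y, Om x y ->
     a (n - 1)%nat x y = c1 + sumR n (fun j =>
       if (2 * j <=? n - 3)%nat then (-1) ^ j * a (n - 3 - 2 * j)%nat x y else 0)) ->
  (forall x y, Om x y ->
     a n x y = c2 + sumR n (fun j =>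
       if (2 * j <=? n - 2)%nat then (-1) ^ j * a (n - 2 - 2 * j)%nat x y else 0)) ->
  (forall k, n = (2 * k)%nat ->
     let Se := fun x y => sumR k (fun j => (-1) ^ j * INR (n - 2 * j) * a (2 * j)%nat x y) in
     let So := fun x y => sumR (k - 1) (fun j =>
                 (-1) ^ j * INR (n - 2 - 2 * j) * a (2 * j + 1)%nat x y) in
     forall x y, Om x y ->
       div_zero_at (fun x y => Se x y * Lam x y)
                   (fun x y => (- So x y + (-1) ^ (k + 1) * INR (n - 1) * c1) * Lam x y) x y /\
       div_zero_at (fun x y => (So x y + (-1) ^ (k + 1) * c1) * Lam x y)
                   (fun x y => (Se x y + (-1) ^ (k + 1) * INR n * c2) * Lam x y) x y) /\
  (forall k, n = (2 * k + 1)%nat ->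
     let Te := fun x y => sumR k (fun j => (-1) ^ j * INR (n - 1 - 2 * j) * a (2 * j)%nat x y) in
     let To := fun x y => sumR k (fun j =>
                 (-1) ^ j * INR (n - 1 - 2 * j) * a (2 * j + 1)%nat x y) in
     forall x y, Om x y ->
       div_zero_at (fun x y => (Te x y + (-1) ^ k * c1) * Lam x y)
                   (fun x y => (- To x y + (-1) ^ k * INR n * c2) * Lam x y) x y /\
       div_zero_at (fun x y => To x y * Lam x y)
                   (fun x y => (Te x y + (-1) ^ (k + 1) * INR (n - 1) * c1) * Lam x y) x y).
Proof.
  intros Hn Hop HsL Hpos Hsa HP Hc1 Hc2.
  pose proof (divergence_equations n Om Lam a c1 c2 Hn Hop HsL Hpos Hsa HP Hc1 Hc2) as Hdiv.
  assert (Halpha : forall x y, Om x y -> peval Ci (coeffs n (fun m => a m x y)) = alpha0 n c1 c2)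
    by (intros x y Hxy; apply peval_i_of_constraints; auto).
  assert (Hn1 : INR (n - 1) = INR n - 1) by (rewrite minus_INR by lia; reflexivity).
  (* Each required equation is one of the two divergence equations, after identifying
     the sums of the statement with Re E(i), Im E(i) on Om. *)
  split; intros k Hk; cbv zeta; intros x y Hxy;
    destruct (Hdiv x y Hxy) as [D1 D2];
    (split; [apply (div_zero_at_congr Om _ _ _ _ x y Hop Hxy D1)
            | apply (div_zero_at_congr Om _ _ _ _ x y Hop Hxy D2)]);
    intros u v Huv; cbv beta; unfold beta_i.
  (* n = 2k: S_e = Re E(i) and S_o + (-1)^(k+1) c1 = Im E(i) *)
  1-4: destruct (even_case_sums n k c1 c2 (fun m => a m u v) Hk ltac:(lia) (Halpha u v Huv))
         as [Se So]; destruct (alpha0_even n k c1 c2 Hk) as [Are Aim]; cbv beta in Se, So;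
       rewrite <- ?Se, <- ?So, ?Are, ?Aim, ?Hn1, ?pow_add; simpl; ring.
  (* n = 2k + 1: T_e + (-1)^k c1 = Re E(i) and T_o = Im E(i) *)
  all: destruct (odd_case_sums n k c1 c2 (fun m => a m u v) Hk (Halpha u v Huv))
         as [Te To]; destruct (alpha0_odd n k c1 c2 Hk) as [Are Aim]; cbv beta in Te, To;
       rewrite <- ?Te, <- ?To, ?Are, ?Aim, ?Hn1, ?pow_add; simpl; ring.
Qed.
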